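(* Let $P$ be a locally finite poset, $R$ a commutative unital ring and $n\ge 2$. For every integer $k\ge 0$, the submodule $J^n_k(P,R)$ is a (two-sided) ideal of $I^n(P,R)$.
   Context: For a poset $P$ and $n\ge 2$, $P^n_\le=\{(x_1,\dots,x_n)\in P^n: x_1\le\dots\le x_n\}$. For $\mathbf{x}=(x_1,\dots,x_n)\in P^n_\le$, $\mathcal{I}(\mathbf{x})=[x_1,x_2]\times\dots\times[x_{n-1},x_n]$, where $[a,b]=\{c\in P: a\le c\le b\}$. $I^n(P,R)$ is the $R$-module of functions $f:P^n_\le\to R$ with multiplication $(fg)(\mathbf{x})=\sum_{\mathbf{y}\in\mathcal{I}(\mathbf{x})}f(x_1,\mathbf{y})g(\mathbf{y},x_n)$. For $a\le b$, $l(a,b)$ is the length of the interval $[a,b]$, i.e. the maximum of $|C|-1$ over chains $C\subseteq[a,b]$. $J^n_k(P,R)=\{f\in I^n(P,R): f(x_1,\dots,x_n)=0 \text{ whenever } l(x_1,x_n)<k\}$. An ideal is an $R$-submodule $I$ with $I^n(P,R)\,I\subseteq I$ and $I\,I^n(P,R)\subseteq I$. *)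

From HB Require Import structures.
From mathcomp Require Import all_boot all_order all_algebra.
From mathcomp Require Import boolp classical_sets functions cardinality fsbigop.
Set Implicit Arguments. Unset Strict Implicit. Unset Printing Implicit Defensive.
Import Order.TTheory GRing.Theory.
Local Open Scope classical_set_scope.
Local Open Scope order_scope.

(* Points of P^n are represented as sequences x = [:: x_1; ...; x_n];
   P^n_<= is the set of such sequences of size n that are sorted by <=.
   Elements of I^n(P,R) are represented as functions seq P -> R; only their
   values on P^n_<= matter (all notions below only inspect those values). *)

Section IncidenceDefs.
Context {d : Order.disp_t} (P : porderType d).

Definition itv (a b : P) : set P := [set c | a <= c <= b].

Definition locally_finite : Prop := forall a b : P, finite_set (itv a b).

Definition chains_n (n : nat) : set (seq P) :=
  [set x | size x = n /\ sorted <=%O x].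

(* I(x) = [x_1,x_2] x ... x [x_{n-1},x_n], as a set of sequences of size n-1 *)
Fixpoint Iset (x : seq P) : set (seq P) :=
  match x with
  | a :: ((b :: _) as t) =>
      [set y | exists c ys, y = c :: ys /\ a <= c <= b /\ Iset t ys]
  | _ => [set [::]]
  end.

(* finite chains in [a,b], represented as strictly increasing sequences;
   the cardinality of the chain is the size of the sequence *)
Definition chain_in (a b : P) (s : seq P) : Prop :=
  sorted <%O s /\ (forall c, c \in s -> a <= c <= b).

Definition is_length (a b : P) (m : nat) : Prop :=
  (exists s, chain_in a b s /\ size s = m.+1) /\
  (forall s, chain_in a b s -> (size s <= m.+1)%N).

Definition ilen (a b : P) : nat := xget 0%N [set m | is_length a b m].

Variable R : comPzRingType.
Local Open Scope ring_scope.

Definition imul (f g : seq P -> R) : seq P -> R := fun x =>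
  match x with
  | [::] => 0
  | x1 :: t => \sum_(y \in Iset x) f (x1 :: y) * g (rcons y (last x1 t))
  end.

Definition Jnk (n k : nat) : set (seq P -> R) :=
  [set f | forall x1 t, chains_n n (x1 :: t) ->
             (ilen x1 (last x1 t) < k)%N -> f (x1 :: t) = 0].

Definition is_ideal (I : set (seq P -> R)) : Prop :=
  [/\ I (fun _ => 0),
      (forall f g, I f -> I g -> I (fun x => f x + g x)),
      (forall (r : R) f, I f -> I (fun x => r * f x)),
      (forall f g, I g -> I (imul f g)) &
      (forall f g, I f -> I (imul f g))].

End IncidenceDefs.

From HB Require Import structures.
From mathcomp Require Import all_boot all_order all_algebra.
From mathcomp Require Import boolp classical_sets functions cardinality fsbigop.
Set Implicit Arguments. Unset Strict Implicit. Unset Printing Implicit Defensive.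
Import Order.TTheory GRing.Theory.
Local Open Scope classical_set_scope.
Local Open Scope order_scope.

(* A summand of (fg)(x) is indexed by y in I(x), and x_1 <= y_1 <= ... <= y_{n-1}
   <= x_n, so both arguments (x_1, y) and (y, x_n) are chains whose endpoints
   lie in [x_1, x_n].  Since a subinterval of [x_1, x_n] has length at most
   l(x_1, x_n), one of the two factors vanishes whenever l(x_1, x_n) < k and
   that factor lies in J^n_k. *)

Section Length.
Context {d : Order.disp_t} (P : porderType d).
Hypothesis lfP : locally_finite P.

Lemma chain_in_widen (a b a' b' : P) s :
  a <= a' -> b' <= b -> chain_in a' b' s -> chain_in a b s.
Proof.
move=> aa' b'b [s_lt s_in]; split=> // c /s_in /andP[a'c cb'].
by rewrite (le_trans aa' a'c) (le_trans cb' b'b).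
Qed.

(* Chains in [a, b] are duplicate-free, hence no longer than the finite interval. *)
Lemma is_length_exists (a b : P) : a <= b -> exists m, is_length a b m.
Proof.
move=> ab; have [e itv_e] : exists e : seq P, itv a b = [set` e].
  exact/finite_seqP.
have size_chain s : chain_in a b s -> (size s <= size e)%N.
  case=> s_lt s_in; apply: uniq_leq_size; first exact: lt_sorted_uniq.
  by move=> c /s_in c_ab; have : itv a b c by []; rewrite itv_e.
pose Q m := `[< exists s, chain_in a b s /\ size s = m.+1 >].
have Q0 : exists m, Q m.
  exists 0%N; apply/asboolP; exists [:: a]; split=> //; split=> // c.
  by rewrite inE => /eqP ->; rewrite lexx ab.
have Q_bounded m : Q m -> (m <= size e)%N.
  by case/asboolP=> s [/size_chain s_le s_size]; apply: ltnW; rewrite -s_size.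
have [m /asboolP Qm Q_max] := ex_maxnP Q0 Q_bounded.
exists m; split=> // s s_chain; case s_size: (size s) => [|m'] //.
by apply: Q_max; apply/asboolP; exists s.
Qed.

Lemma ilenP (a b : P) : a <= b -> is_length a b (ilen a b).
Proof. by move/is_length_exists=> ?; apply: xgetPex. Qed.

Lemma ilen_widen (a b a' b' : P) :
  a <= a' -> a' <= b' -> b' <= b -> (ilen a' b' <= ilen a b)%N.
Proof.
move=> aa' a'b' b'b.
have [[s [s_chain s_size]] _] := ilenP a'b'.
rewrite -ltnS -s_size; apply: (ilenP (le_trans aa' (le_trans a'b' b'b))).2.
exact: chain_in_widen s_chain.
Qed.

End Length.

Section Incidence.
Context {d : Order.disp_t} (P : porderType d).

Lemma path_le_head (a : P) s : path <=%O a s -> a <= head a s.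
Proof. by case: s => [|b s] /=; [rewrite lexx | case/andP]. Qed.

Lemma path_le_last (a : P) s : path <=%O a s -> a <= last a s.
Proof.
elim: s a => [|b s IHs] a /=; first by rewrite lexx.
by case/andP=> ab /IHs; apply: le_trans.
Qed.

Lemma Iset_path (t : seq P) (a : P) y : sorted <=%O (a :: t) ->
  Iset (a :: t) y -> size y = size t /\ path <=%O a (rcons y (last a t)).
Proof.
elim: t a y => [|b t IHt] a y /=; first by move=> _ ->; rewrite /= lexx.
case/andP=> ab bt [c [ys [-> [/andP[ac cb] Iys]]]].
have [ys_size ys_path] := IHt b ys bt Iys.
by rewrite /= ys_size ac (path_le (@le_trans _ P) cb ys_path).
Qed.

Variables (R : comPzRingType) (n k : nat).
Hypotheses (lfP : locally_finite P) (n_gt0 : (0 < n)%N).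

Lemma Jnk_eq0 (f : seq P -> R) (a b : P) z : Jnk n k f -> chains_n n z ->
  a <= head a z -> last a z <= b -> (ilen a b < k)%N -> f z = 0%R.
Proof.
move=> f_J; case: z => [[size0 _]|z1 zs z_chain].
  by move: n_gt0; rewrite -size0.
move=> /= az1 zsb ab_short.
apply: (f_J _ _ z_chain); apply: leq_ltn_trans ab_short.
exact: (ilen_widen lfP az1 (path_le_last (proj2 z_chain)) zsb).
Qed.

Lemma Jnk_imull (f g : seq P -> R) : Jnk n k g -> Jnk n k (imul f g).
Proof.
move=> g_J x1 t [x_size x_sorted] x_short /=; apply: fsbig1 => y Iy.
have [y_size y_path] := Iset_path x_sorted Iy.
have yx_chain : chains_n n (rcons y (last x1 t)).
  by split; [rewrite size_rcons y_size | exact: path_sorted y_path].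
have yx_last : last x1 (rcons y (last x1 t)) <= last x1 t by rewrite last_rcons.
by rewrite (Jnk_eq0 g_J yx_chain (path_le_head y_path) yx_last x_short) mulr0.
Qed.

Lemma Jnk_imulr (f g : seq P -> R) : Jnk n k f -> Jnk n k (imul f g).
Proof.
move=> f_J x1 t [x_size x_sorted] x_short /=; apply: fsbig1 => y Iy.
have [y_size] := Iset_path x_sorted Iy.
rewrite rcons_path => /andP[y_path y_last].
have xy_chain : chains_n n (x1 :: y) by split; rewrite //= y_size.
by rewrite (Jnk_eq0 f_J xy_chain (lexx x1) y_last x_short) mul0r.
Qed.

End Incidence.

Theorem lemma2p1 (d : Order.disp_t) (P : porderType d) (R : comPzRingType)
  (n : nat) (hP : locally_finite P) (hn : (2 <= n)%N) (k : nat) :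
  is_ideal (@Jnk d P R n k).
Proof.
have n_gt0 : (0 < n)%N by apply: leq_trans hn.
split.
- by [].
- by move=> f g f_J g_J x1 t x_chain x_short; rewrite f_J // g_J // addr0.
- by move=> r f f_J x1 t x_chain x_short; rewrite f_J // mulr0.
- by move=> f g; apply: Jnk_imull.
- by move=> f g; apply: Jnk_imulr.
Qed.
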